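(* Let $M=(E,r)$ be a matroid with $E$ nonempty and $r(M)=r(E)$. Then, as formal power series in $v,w$, \[ \sum_{t,u\ge 0}Q_M(t,u)\,v^t w^u=\frac{1}{(1-v)^{|E|-r(M)}(1-w)^{r(M)}(1-vw)}\cdot T_M\!\left(\frac{1-vw}{1-v},\ \frac{1-vw}{1-w}\right). \]
   Context: For a matroid $M=(E,r)$, $P(M)\subseteq\mathbb R^E$ is the convex hull of the indicator vectors $\mathbf e_B$ of its bases $B$. Let $\Delta=\operatorname{conv}\{\mathbf e_i:i\in E\}$ and $\nabla=-\Delta$. For integers $t,u\ge 0$ let $Q_M(t,u)=\#\big((P(M)+u\Delta+t\nabla)\cap\mathbb Z^E\big)$ (Minkowski sum). The Tutte polynomial is $T_M(x,y)=\sum_{S\subseteq E}(x-1)^{r(E)-r(S)}(y-1)^{|S|-r(S)}$; the right-hand side is a rational function in $v,w$ regular at the origin, and is interpreted via its power series expansion. *)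

From HB Require Import structures.
From mathcomp Require Import all_boot all_order all_algebra.
From Stdlib Require Import ClassicalEpsilon.
Set Implicit Arguments.
Unset Strict Implicit.
Unset Printing Implicit Defensive.
Import Order.TTheory GRing.Theory Num.Theory.
Local Open Scope ring_scope.

Definition is_matroid_rank (E : finType) (r : {set E} -> nat) : Prop :=
  [/\ forall X : {set E}, (r X <= #|X|)%N,
      forall X Y : {set E}, X \subset Y -> (r X <= r Y)%N &
      forall X Y : {set E}, (r (X :|: Y) + r (X :&: Y) <= r X + r Y)%N].

Definition is_basis (E : finType) (r : {set E} -> nat) (B : {set E}) : bool :=
  (r B == #|B|) && (#|B| == r [set: E]).

Definition in_hull (R : realFieldType) (E I : finType) (A : {pred I})
    (pts : I -> E -> R) (x : E -> R) : Prop :=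
  exists l : I -> R,
    [/\ forall i, 0 <= l i,
        forall i, i \notin A -> l i = 0,
        \sum_(i in A) l i = 1 &
        forall e, x e = \sum_(i in A) l i * pts i e].

Definition indic (R : realFieldType) (E : finType) (S : {set E}) : E -> R :=
  fun e => if e \in S then 1 else 0.

Definition in_PM (R : realFieldType) (E : finType) (r : {set E} -> nat) (x : E -> R) :=
  in_hull (is_basis r) (fun B => indic R B) x.

Definition in_Delta (R : realFieldType) (E : finType) (x : E -> R) :=
  in_hull (I := E) predT (fun i : E => indic R [set i]) x.

(* x in P(M) + u Delta + t Nabla, where Nabla = - Delta *)
Definition in_minkowski (R : realFieldType) (E : finType) (r : {set E} -> nat)
    (t u : nat) (x : E -> R) : Prop :=
  exists p d1 d2 : E -> R,
    [/\ in_PM r p, in_Delta d1, in_Delta d2 &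
        forall e, x e = p e + u%:R * d1 e + t%:R * (- d2 e)].

Definition asbool (P : Prop) : bool :=
  if excluded_middle_informative P then true else false.

(* Q_M(t,u) = number of integer points of P(M) + u Delta + t Nabla.
   Every such point has all coordinates in [-t, u+1] (since P(M) ⊆ [0,1]^E,
   u Delta ⊆ [0,u]^E, t Nabla ⊆ [-t,0]^E), so we enumerate the integer points
   x = f - t with f : E -> {0, ..., t+u+1}. *)
Definition QM (R : realFieldType) (E : finType) (r : {set E} -> nat) (t u : nat) : nat :=
  #|[set f : {ffun E -> 'I_(t + u + 2)} |
       asbool (in_minkowski r t u (fun e => (nat_of_ord (f e))%:R - t%:R : R))]|.

(* a series is its coefficient function: s t u = coefficient of v^t w^u *)
Definition fps := nat -> nat -> rat.

Definition fps_const (c : rat) : fps := fun t u => if (t == 0)%N && (u == 0)%N then c else 0.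
Definition fps_v : fps := fun t u => if (t == 1)%N && (u == 0)%N then 1 else 0.
Definition fps_w : fps := fun t u => if (t == 0)%N && (u == 1)%N then 1 else 0.
Definition fps_add (f g : fps) : fps := fun t u => f t u + g t u.
Definition fps_sub (f g : fps) : fps := fun t u => f t u - g t u.
Definition fps_mul (f g : fps) : fps :=
  fun t u => \sum_(i < t.+1) \sum_(j < u.+1) f i j * g (t - i)%N (u - j)%N.
Fixpoint fps_pow (f : fps) (n : nat) : fps :=
  match n with 0 => fps_const 1 | n'.+1 => fps_mul f (fps_pow f n') end.

(* multiplicative inverse of a series with nonzero constant term, computed by
   the usual recursion on total degree: inv_aux f N is correct in degrees <= N *)
Fixpoint fps_inv_aux (f : fps) (N : nat) : fps :=
  match N with
  | 0 => fun t u => if (t == 0)%N && (u == 0)%N then (f 0%N 0%N)^-1 else 0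
  | N'.+1 =>
      let g := fps_inv_aux f N' in
      fun t u =>
        if (t + u <= N')%N then g t u
        else - ((\sum_(i < t.+1) \sum_(j < u.+1)
                   (if (i + j == 0)%N then 0 else f i j * g (t - i)%N (u - j)%N))
                / f 0%N 0%N)
  end.
Definition fps_inv (f : fps) : fps := fun t u => fps_inv_aux f (t + u) t u.

Definition tutte_eval (E : finType) (r : {set E} -> nat) (X Y : fps) : fps :=
  fun t u => \sum_(S : {set E})
     fps_mul (fps_pow (fps_sub X (fps_const 1)) (r [set: E] - r S)%N)
             (fps_pow (fps_sub Y (fps_const 1)) (#|S| - r S)%N) t u.

Definition one_minus (f : fps) : fps := fps_sub (fps_const 1) f.
Definition fps_vw : fps := fps_mul fps_v fps_w.

Definition rhs_series (E : finType) (r : {set E} -> nat) : fps :=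
  let rM := r [set: E] in
  fps_mul (fps_inv (fps_mul (fps_mul (fps_pow (one_minus fps_v) (#|E| - rM)%N)
                                     (fps_pow (one_minus fps_w) rM))
                            (one_minus fps_vw)))
          (tutte_eval r (fps_mul (one_minus fps_vw) (fps_inv (one_minus fps_v)))
                        (fps_mul (one_minus fps_vw) (fps_inv (one_minus fps_w)))).

From HB Require Import structures.
From mathcomp Require Import all_boot all_order all_algebra.
From mathcomp Require boolp.
From mathcomp Require Import zify ring lra.
From Stdlib Require Import ClassicalEpsilon.
Set Implicit Arguments. Unset Strict Implicit. Unset Printing Implicit Defensive.
Import Order.TTheory GRing.Theory Num.Theory.
Local Open Scope ring_scope.

(* A lattice point [x] of P(M) + u Delta + t Nabla with positive support [S],
   negative mass [alpha] and excess [beta] over the indicator of [S] is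
   characterised by [r(E) - r(S) + alpha <= t] and
   [|S| + beta - alpha = r(E) + u - t]: necessity by summing a decomposition
   of [x] over the complement of [S] and over [E], sufficiency by subtracting
   the indicator of a basis meeting [S] in [r(S)] elements and splitting the
   rest into a positive part ([u Delta]) and a negative part ([t Nabla]).
   For fixed [S] the pairs [(alpha, beta)] have generating function
   [(1-v)^(|S|-|E|) (1-w)^(-|S|)], and the two conditions say that [(t, u)]
   is an exponent of [v^(r(E)-r(S)+alpha) w^(|S|-r(S)+beta) / (1-vw)].
   Since [X - 1 = v(1-w)/(1-v)] and [Y - 1 = w(1-v)/(1-w)], this is exactly
   the [S]-term of the right-hand side. *)

(** * The ring of formal power series in [v], [w] *)

Lemma fpsP (f g : fps) : (forall t u, f t u = g t u) -> f = g.
Proof. by move=> fg; apply: boolp.funext => t; apply: boolp.funext => u; apply: fg. Qed.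

Definition agree_upto (T U : nat) (f g : fps) :=
  forall i j, (i <= T)%N -> (j <= U)%N -> f i j = g i j.

Lemma agree_upto_mul T U f f' g g' :
  agree_upto T U f f' -> agree_upto T U g g' ->
  agree_upto T U (fps_mul f g) (fps_mul f' g').
Proof.
move=> ff' gg' i j le_iT le_jU; apply: eq_bigr => [[a lt_ai]] _.
apply: eq_bigr => [[b lt_bj]] _ /=; rewrite ff' ?gg' //; lia.
Qed.

Definition fps_of_poly (P : {poly {poly rat}}) : fps := fun i j => P`_i`_j.

Definition fps_trunc (T U : nat) (f : fps) : {poly {poly rat}} :=
  \poly_(i < T.+1) \poly_(j < U.+1) f i j.

Lemma fps_of_polyM P Q :
  fps_mul (fps_of_poly P) (fps_of_poly Q) = fps_of_poly (P * Q).
Proof.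
apply: fpsP => t u; rewrite /fps_of_poly coefM coef_sum.
by apply: eq_bigr => i _; rewrite coefM.
Qed.

Lemma agree_fps_trunc T U f : agree_upto T U (fps_of_poly (fps_trunc T U f)) f.
Proof.
by move=> i j le_iT le_jU; rewrite /fps_of_poly coef_poly ltnS le_iT coef_poly ltnS le_jU.
Qed.

(* Coefficients of products up to [(t, u)] only see coefficients up to
   [(t, u)], so ring identities transfer from the polynomial ring. *)
Lemma fps_mulA : associative fps_mul.
Proof.
move=> f g h; apply: fpsP => t u; have tr := @agree_fps_trunc t u.
rewrite -[LHS](agree_upto_mul (tr f) (agree_upto_mul (tr g) (tr h))) //.
rewrite -[RHS](agree_upto_mul (agree_upto_mul (tr f) (tr g)) (tr h)) //.
by rewrite !fps_of_polyM mulrA.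
Qed.

Lemma fps_mulC : commutative fps_mul.
Proof.
move=> f g; apply: fpsP => t u; have tr := @agree_fps_trunc t u.
rewrite -[LHS](agree_upto_mul (tr f) (tr g)) //.
by rewrite -[RHS](agree_upto_mul (tr g) (tr f)) // !fps_of_polyM mulrC.
Qed.

Lemma fps_mul1 : left_id (fps_const 1) fps_mul.
Proof.
have one : fps_const 1 = fps_of_poly 1.
  apply: fpsP => i j; rewrite /fps_of_poly /fps_const coef1.
  by case: (i == 0)%N; rewrite /= ?coef1 ?coef0 //; case: (j == 0)%N.
move=> f; apply: fpsP => t u; have tr := @agree_fps_trunc t u.
rewrite one -[LHS](agree_upto_mul (fun _ _ _ _ => erefl) (tr f)) //.
by rewrite fps_of_polyM mul1r tr.
Qed.

Lemma fps_mulDl : left_distributive fps_mul fps_add.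
Proof.
move=> f g h; apply: fpsP => t u; rewrite /fps_mul /fps_add -big_split /=.
by apply: eq_bigr => i _; rewrite -big_split; apply: eq_bigr => j _; rewrite mulrDl.
Qed.

Definition fps0 : fps := fun _ _ => 0.
Definition fps_opp (f : fps) : fps := fun t u => - f t u.

Lemma fps_addA : associative fps_add.
Proof. by move=> f g h; apply: fpsP => t u; rewrite /fps_add addrA. Qed.
Lemma fps_addC : commutative fps_add.
Proof. by move=> f g; apply: fpsP => t u; rewrite /fps_add addrC. Qed.
Lemma fps_add0 : left_id fps0 fps_add.
Proof. by move=> f; apply: fpsP => t u; rewrite /fps_add add0r. Qed.
Lemma fps_addN : left_inverse fps0 fps_opp fps_add.
Proof. by move=> f; apply: fpsP => t u; rewrite /fps_add addNr. Qed.

Definition fpsR := fps.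
HB.instance Definition _ := boolp.gen_eqMixin fpsR.
HB.instance Definition _ := boolp.gen_choiceMixin fpsR.
HB.instance Definition _ :=
  GRing.isZmodule.Build fpsR fps_addA fps_addC fps_add0 fps_addN.

Lemma fps_oner_neq0 : (fps_const 1 : fpsR) != 0.
Proof. by apply/eqP => /(congr1 (fun f : fpsR => f 0%N 0%N)) /eqP; rewrite oner_eq0. Qed.

HB.instance Definition _ := GRing.Zmodule_isComNzRing.Build fpsR
  fps_mulA fps_mulC fps_mul1 fps_mulDl fps_oner_neq0.

Lemma fps_mulE (f g : fps) : fps_mul f g = (f : fpsR) * (g : fpsR). Proof. by []. Qed.
Lemma fps_subE (f g : fps) : fps_sub f g = (f : fpsR) - (g : fpsR). Proof. by []. Qed.
Lemma fps_oneE : fps_const 1 = 1 :> fpsR. Proof. by []. Qed.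
Lemma one_minusE (f : fps) : one_minus f = 1 - (f : fpsR). Proof. by []. Qed.
Lemma fps_powE (f : fps) n : fps_pow f n = (f : fpsR) ^+ n.
Proof. by elim: n => // n IH; rewrite exprS /= IH. Qed.

Lemma fps_coef_sum (I : Type) (s : seq I) (P : pred I) (F : I -> fpsR) t u :
  (\sum_(i <- s | P i) F i) t u = \sum_(i <- s | P i) F i t u.
Proof. by elim/big_rec2: _ => // i y1 y2 _ <-. Qed.

Lemma fps_coefB (f g : fpsR) t u : (f - g) t u = f t u - g t u. Proof. by []. Qed.

Lemma agree_upto_exp T U (f g : fpsR) n :
  agree_upto T U f g -> agree_upto T U (f ^+ n) (g ^+ n).
Proof.
move=> fg; elim: n => [|n IH]; first by move=> i j.
by rewrite !exprS; apply: agree_upto_mul.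
Qed.

Lemma fps_coef00M (f g : fpsR) : (f * g) 0%N 0%N = f 0%N 0%N * g 0%N 0%N.
Proof. by rewrite -fps_mulE /fps_mul !big_ord1. Qed.

Lemma sum_split00 (t u : nat) (F : nat -> nat -> rat) :
  \sum_(i < t.+1) \sum_(j < u.+1) F i j =
  F 0%N 0%N + \sum_(i < t.+1) \sum_(j < u.+1) (if (i + j == 0)%N then 0 else F i j).
Proof.
rewrite big_ord_recl [in RHS]big_ord_recl big_ord_recl [in RHS]big_ord_recl /=.
by rewrite add0r -!addrA.
Qed.

Lemma fps_invE (f g : fpsR) : f * g = 1 -> fps_inv f = g.
Proof.
move=> fg; have fg00 : f 0%N 0%N * g 0%N 0%N = 1 by rewrite -fps_coef00M fg.
have f00 : f 0%N 0%N != 0 by apply: contra_eq_neq fg00 => ->; rewrite mul0r eq_sym oner_eq0.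
suff inv_aux N t u : (t + u <= N)%N -> fps_inv_aux f N t u = g t u.
  by apply: fpsP => t u; apply: inv_aux.
elim: N t u => [|N IH] t u le_tuN /=.
  have [-> ->] : t = 0%N /\ u = 0%N by lia.
  by rewrite -[RHS](mulKf f00) fg00 mulr1.
case: ifP => [le_tuN'|/negbT lt_Ntu]; first exact: IH.
have := congr1 (fun h : fpsR => h t u) fg.
rewrite -fps_mulE /fps_mul (sum_split00 t u (fun i j => f i j * g (t - i)%N (u - j)%N)).
rewrite !subn0 -fps_oneE /fps_const ifF; last by apply/negbTE; lia.
move/eqP; rewrite addrC addr_eq0 => /eqP sum_eq.
apply: (mulfI f00); rewrite mulrN mulrC divfK // -[_ * g t u]opprK -sum_eq.
congr (- _).
apply: eq_bigr => [[i lt_it]] _; apply: eq_bigr => [[j lt_ju]] _ /=.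
by case: ifP => // /negbT nz_ij; rewrite IH //; lia.
Qed.

Definition fps_mono (p q : nat) : fpsR := fun i j => if (i == p) && (j == q) then 1 else 0.

Lemma fps_vE : fps_v = fps_mono 1 0. Proof. by []. Qed.
Lemma fps_wE : fps_w = fps_mono 0 1. Proof. by []. Qed.
Lemma fps_mono00 : fps_mono 0 0 = 1. Proof. by []. Qed.

Lemma sum_ord_eq (n p : nat) (F : nat -> rat) :
  \sum_(i < n) (if (i : nat) == p then F i else 0) = if (p < n)%N then F p else 0.
Proof. by rewrite -big_mkcond /= big_ord1_eq. Qed.

Lemma coef_fps_monoM p q (g : fpsR) t u :
  (fps_mono p q * g) t u =
  if (p <= t)%N && (q <= u)%N then g (t - p)%N (u - q)%N else 0.
Proof.
rewrite -fps_mulE /fps_mul /fps_mono.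
transitivity (\sum_(i < t.+1) if (i : nat) == p then
  \sum_(j < u.+1) (if (j : nat) == q then g (t - i)%N (u - j)%N else 0) else 0).
  apply: eq_bigr => i _; case: eqP => _ /=; last by rewrite big1 // => j _; rewrite mul0r.
  by apply: eq_bigr => j _; case: eqP; rewrite ?mul1r ?mul0r.
rewrite (sum_ord_eq _ _ (fun i => \sum_(j < u.+1)
  (if (j : nat) == q then g (t - i)%N (u - j)%N else 0))).
by rewrite (sum_ord_eq _ _ (fun j => g (t - p)%N (u - j)%N)) !ltnS; case: (p <= t)%N.
Qed.

Lemma fps_monoD p q p' q' : fps_mono p q * fps_mono p' q' = fps_mono (p + p') (q + q').
Proof.
apply: fpsP => t u; rewrite coef_fps_monoM /fps_mono.
case: (leqP p t) => le_pt; case: (leqP q u) => le_qu /=; try (symmetry; apply/ifF; lia).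
by congr (if _ then _ else _); apply/idP/idP; lia.
Qed.

Lemma fps_monoE a b : fps_mono a b = (fps_v : fpsR) ^+ a * (fps_w : fpsR) ^+ b.
Proof.
elim: a => [|a IHa]; last by rewrite exprS -mulrA -IHa fps_vE fps_monoD.
rewrite expr0 mul1r; elim: b => [|b IHb]; first by rewrite expr0 fps_mono00.
by rewrite exprS -IHb fps_wE fps_monoD.
Qed.

Lemma fps_vwE : fps_vw = fps_mono 1 1.
Proof. by rewrite /fps_vw fps_mulE fps_vE fps_wE fps_monoD. Qed.

Lemma prod_fps_mono (I : Type) (s : seq I) (P : pred I) (a b : I -> nat) :
  \prod_(i <- s | P i) fps_mono (a i) (b i) =
  fps_mono (\sum_(i <- s | P i) a i) (\sum_(i <- s | P i) b i).
Proof.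
elim: s => [|x s IH]; first by rewrite !big_nil.
by rewrite !big_cons; case: (P x); rewrite // IH fps_monoD.
Qed.

Definition geom_v : fpsR := fun t u => if u == 0%N then 1 else 0.
Definition geom_w : fpsR := fun t u => if t == 0%N then 1 else 0.
Definition geom_vw : fpsR := fun t u => if t == u then 1 else 0.

Lemma geom_vK : (1 - (fps_v : fpsR)) * geom_v = 1.
Proof.
apply: fpsP => t u; rewrite mulrBl mul1r fps_vE fps_coefB coef_fps_monoM.
by case: t => [|t]; case: u => [|u]; rewrite /= ?subrr ?subr0.
Qed.

Lemma geom_wK : (1 - (fps_w : fpsR)) * geom_w = 1.
Proof.
apply: fpsP => t u; rewrite mulrBl mul1r fps_wE fps_coefB coef_fps_monoM.
by case: t => [|t]; case: u => [|u]; rewrite /= ?subrr ?subr0.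
Qed.

Lemma geom_vwK : (1 - (fps_vw : fpsR)) * geom_vw = 1.
Proof.
apply: fpsP => t u; rewrite mulrBl mul1r fps_vwE fps_coefB coef_fps_monoM.
by case: t => [|t]; case: u => [|u]; rewrite /= ?subrr ?subr0 // !subn1 /= /geom_vw eqSS subrr.
Qed.

Lemma tutte_evalE (E : finType) (r : {set E} -> nat) (X Y : fps) :
  tutte_eval r X Y = \sum_(S : {set E})
    ((X : fpsR) - 1) ^+ (r [set: E] - r S) * ((Y : fpsR) - 1) ^+ (#|S| - r S).
Proof.
apply: fpsP => t u; rewrite fps_coef_sum; apply: eq_bigr => S _.
by rewrite fps_mulE !fps_powE !fps_subE.
Qed.

Lemma exprM_inv_shift (R : comPzRingType) (g y : R) (m k b : nat) :
  y * g = 1 -> m = (k + b)%N -> g ^+ m * y ^+ b = g ^+ k.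
Proof. by move=> yg ->; rewrite exprD -mulrA -exprMn [g * y]mulrC yg expr1n mulr1. Qed.

Section RhsSeries.
Variables (E : finType) (r : {set E} -> nat).
Hypotheses (rank_top : forall S, (r S <= r [set: E])%N)
           (rank_card : forall S, (r S <= #|S|)%N).

Local Notation v := (fps_v : fpsR).
Local Notation w := (fps_w : fpsR).

Lemma rhs_prefactorE :
  fps_inv (fps_mul (fps_mul (fps_pow (one_minus fps_v) (#|E| - r [set: E]))
                            (fps_pow (one_minus fps_w) (r [set: E])))
                   (one_minus fps_vw)) =
  geom_v ^+ (#|E| - r [set: E]) * geom_w ^+ r [set: E] * geom_vw.
Proof.
apply: fps_invE; rewrite !fps_mulE !fps_powE !one_minusE.
transitivity (((1 - v) * geom_v) ^+ (#|E| - r [set: E]) *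
  ((1 - w) * geom_w) ^+ r [set: E] * ((1 - (fps_vw : fpsR)) * geom_vw)).
  by rewrite !exprMn; ring.
by rewrite geom_vK geom_wK geom_vwK !expr1n !mulr1.
Qed.

Lemma rhs_seriesE :
  rhs_series r = \sum_(S : {set E})
    fps_mono (r [set: E] - r S) (#|S| - r S) *
    geom_v ^+ (#|E| - #|S|) * geom_w ^+ #|S| * geom_vw :> fpsR.
Proof.
have inv_v : fps_inv (one_minus fps_v) = geom_v by apply/fps_invE/geom_vK.
have inv_w : fps_inv (one_minus fps_w) = geom_w by apply/fps_invE/geom_wK.
have vw : (fps_vw : fpsR) = v * w by [].
have X1 : (1 - (fps_vw : fpsR)) * geom_v - 1 = v * (1 - w) * geom_v.
  by rewrite -{2}geom_vK vw; ring.
have Y1 : (1 - (fps_vw : fpsR)) * geom_w - 1 = w * (1 - v) * geom_w.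
  by rewrite -{2}geom_wK vw; ring.
rewrite /rhs_series rhs_prefactorE inv_v inv_w !fps_mulE !one_minusE tutte_evalE X1 Y1.
rewrite mulr_sumr; apply: eq_bigr => S _.
set rE := r [set: E]; set a := (rE - r S)%N; set b := (#|S| - r S)%N.
have le_SE : (#|S| <= #|E|)%N by rewrite -cardsT subset_leq_card ?subsetT.
have le_rE : (rE <= #|E|)%N by rewrite -cardsT rank_card.
have := rank_top S; have := rank_card S => le_rS_S le_rS_rE.
have shift1 : (#|E| - rE + a = #|E| - #|S| + b)%N by lia.
have shift2 : (rE + b = #|S| + a)%N by lia.
transitivity (v ^+ a * w ^+ b * geom_vw *
  (geom_v ^+ (#|E| - rE + a) * (1 - v) ^+ b) * (geom_w ^+ (rE + b) * (1 - w) ^+ a)).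
  by rewrite !exprMn !exprD; ring.
rewrite (exprM_inv_shift geom_vK shift1) (exprM_inv_shift geom_wK shift2).
by rewrite fps_monoE; ring.
Qed.

End RhsSeries.

(** * Generating functions of lattice points *)

Lemma coef_mono_geom_vw p q i j :
  (fps_mono p q * geom_vw) i j = if (p <= i)%N && (q + i == p + j)%N then 1 else 0.
Proof.
by rewrite coef_fps_monoM /geom_vw; do ![case: ifP] => // *; lia.
Qed.

Section FibreSeries.
Variables (E : finType) (t K : nat).
Implicit Types (f : {ffun E -> 'I_K}) (S : {set E}).

(* The integer point [x = f - t] is recorded by its positive support [S],
   its negative mass [- \sum_(e \notin S) x e] and its excess
   [\sum_(e \in S) (x e - 1)] over the indicator of [S]. *)
Definition pos_support f : {set E} := [set e | (t < f e)%N].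
Definition neg_mass S f : nat := \sum_(e in ~: S) (t - f e).
Definition pos_excess S f : nat := \sum_(e in S) (f e - t - 1).

Definition fibre_series S : fpsR :=
  \sum_(f | pos_support f == S) fps_mono (neg_mass S f) (pos_excess S f).

Definition coord_series (pos : bool) : fpsR :=
  \sum_(c < K | (t < c)%N == pos)
    (if pos then fps_mono 0 (c - t - 1) else fps_mono (t - c) 0).

Lemma fibre_series_prod S : fibre_series S = \prod_e coord_series (e \in S).
Proof.
under [RHS]eq_bigr => e _ do rewrite /coord_series big_mkcond /=.
rewrite bigA_distr_bigA /fibre_series big_mkcond /=; apply: eq_bigr => f _.
case: eqP => [<-|neqS].
  rewrite (eq_bigr (fun e => fps_mono (if (t < f e)%N then 0 else t - f e)%N
                                      (if (t < f e)%N then f e - t - 1 else 0)%N)).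
    rewrite prod_fps_mono /neg_mass /pos_excess; congr fps_mono.
      by rewrite big_mkcond; apply: eq_bigr => e _; rewrite !inE; case: ltnP.
    by rewrite big_mkcond; apply: eq_bigr => e _; rewrite !inE; case: ltnP.
  by move=> e _; rewrite inE eqxx; case: ltnP.
have [e neq_e] : exists e, (t < f e)%N != (e \in S).
  apply/existsP; apply: contraNT (introN eqP neqS) => /existsPn eqS.
  by apply/eqP/setP => e; rewrite inE; have := eqS e; rewrite negbK => /eqP.
by rewrite [RHS](bigD1 e) //= (negbTE neq_e) mul0r.
Qed.

Lemma fibre_seriesE S :
  fibre_series S = coord_series false ^+ (#|E| - #|S|) * coord_series true ^+ #|S|.
Proof.
rewrite fibre_series_prod.
rewrite (eq_bigr (fun e => if e \in S then coord_series true else coord_series false));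
  last by move=> e _; case: (e \in S).
by rewrite big_if /= !prodr_const mulrC -(cardC S) addKn.
Qed.

Lemma agree_coord_series_neg U :
  (t < K)%N -> agree_upto t U (coord_series false) geom_v.
Proof.
move=> lt_tK i j le_it _; rewrite /coord_series fps_coef_sum big_mkcond /=.
rewrite (eq_bigr (fun c : 'I_K => if (c : nat) == (t - i)%N then geom_v i j else 0)).
  by rewrite (sum_ord_eq _ _ (fun=> _)) ifT //; lia.
move=> c _; case: ltnP => /= [lt_tc | le_ct]; first by case: eqP => // ?; lia.
rewrite /fps_mono /geom_v.
have -> : (i == t - c)%N = ((c : nat) == t - i)%N by apply/eqP/eqP; lia.
by case: (_ == _).
Qed.

Lemma agree_coord_series_pos T u :
  (t + u + 1 < K)%N -> agree_upto T u (coord_series true) geom_w.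
Proof.
move=> ltK i j _ le_ju; rewrite /coord_series fps_coef_sum big_mkcond /=.
rewrite (eq_bigr (fun c : 'I_K => if (c : nat) == (j + t + 1)%N then geom_w i j else 0)).
  by rewrite (sum_ord_eq _ _ (fun=> _)) ifT //; lia.
move=> c _; case: ltnP => /= [lt_tc | le_ct]; last by case: eqP => // ?; lia.
rewrite /fps_mono /geom_w andbC.
have -> : (j == c - t - 1)%N = ((c : nat) == j + t + 1)%N by apply/eqP/eqP; lia.
by case: (_ == _).
Qed.

Lemma count_fibre S a b u : (t + u + 1 < K)%N ->
  \sum_(f | pos_support f == S)
     (if (a + neg_mass S f <= t)%N && (b + pos_excess S f + t == a + neg_mass S f + u)%N
      then 1 else 0 : rat) =
  (fps_mono a b * geom_v ^+ (#|E| - #|S|) * geom_w ^+ #|S| * geom_vw) t u.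
Proof.
move=> ltK.
have agreeF : agree_upto t u (fibre_series S) (geom_v ^+ (#|E| - #|S|) * geom_w ^+ #|S|).
  rewrite fibre_seriesE; apply: agree_upto_mul; apply: agree_upto_exp.
    by apply: agree_coord_series_neg; lia.
  exact: agree_coord_series_pos.
transitivity ((fps_mono a b * fibre_series S * geom_vw) t u).
  rewrite /fibre_series mulr_sumr mulr_suml fps_coef_sum; apply: eq_bigr => f _.
  by rewrite fps_monoD coef_mono_geom_vw.
have refl (h : fps) : agree_upto t u h h by [].
rewrite -mulrA -!fps_mulE (agree_upto_mul (refl _) (agree_upto_mul agreeF (refl _))) //.
by rewrite !fps_mulE !mulrA.
Qed.

End FibreSeries.

(** * Matroids and their base polytopes *)

Section MatroidRank.
Local Open Scope nat_scope.
Variables (E : finType) (r : {set E} -> nat).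
Hypothesis hr : is_matroid_rank r.
Implicit Types (A B I J X Y T : {set E}) (e : E).

Lemma rank_le_card X : r X <= #|X|.
Proof. by case: hr. Qed.

Lemma rankS X Y : X \subset Y -> r X <= r Y.
Proof. by case: hr => _ + _; apply. Qed.

Lemma rank_submod X Y : r (X :|: Y) + r (X :&: Y) <= r X + r Y.
Proof. by case: hr. Qed.

Lemma rank_le_top X : r X <= r [set: E].
Proof. exact/rankS/subsetT. Qed.

Lemma rank0 : r set0 = 0.
Proof. by have := rank_le_card set0; rewrite cards0 leqn0 => /eqP. Qed.

Lemma rankU1 X e : r (e |: X) <= r X + 1.
Proof.
have := rank_submod X [set e]; have := rank_le_card [set e].
by rewrite cards1 setUC; lia.
Qed.

Lemma indepS I J : r I = #|I| -> J \subset I -> r J = #|J|.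
Proof.
move=> indI sJI; have := rank_submod J (I :\: J).
rewrite setDE setIA (setIidPl sJI) setICr rank0 setUIr setUCr setIT (setUidPr sJI).
have := rank_le_card J; have := rank_le_card (I :\: J).
by rewrite -setDE indI -(cardsID J I) (setIidPr sJI); lia.
Qed.

Lemma rank_setU_spanned I T :
  (forall e, e \in T -> r (e |: I) = r I) -> r (I :|: T) = r I.
Proof.
move: {2}#|T| (erefl #|T|) => n; elim: n T => [|n IH] T cardT spanT.
  by move/eqP: cardT; rewrite cards_eq0 => /eqP ->; rewrite setU0.
have [e eT] : exists e, e \in T by apply/set0Pn; rewrite -card_gt0 cardT.
have IT'E : r (I :|: T :\ e) = r I.
  apply: IH => [|x /setD1P [_]]; last exact: spanT.
  by move: cardT; rewrite (cardsD1 e T) eT => -[].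
have := rank_submod (I :|: T :\ e) (e |: I).
have -> : (I :|: T :\ e) :|: (e |: I) = I :|: T.
  apply/setP => x; rewrite !inE; case: eqP => [->|_] /=; first by rewrite eT !orbT.
  by case: (x \in I); rewrite /= ?orbF.
have : r I <= r ((I :|: T :\ e) :&: (e |: I)).
  by apply: rankS; rewrite subsetI subsetUl subsetUr.
have := rankS (subsetUl I T).
by have := spanT e eT; lia.
Qed.

Lemma rank_maximal_indep I A :
  I \subset A -> r I = #|I| ->
  (forall e, e \in A -> r (e |: I) = #|e |: I| -> e \in I) -> r A = #|I|.
Proof.
move=> sIA indI maxI; rewrite -indI -[A](setUidPr sIA).
apply: rank_setU_spanned => e eA; apply/eqP; rewrite eqn_leq (rankS (subsetUr _ _)) andbT.
case: (boolP (e \in I)) => [eI | eNI]; first by rewrite (setUidPr _) ?sub1set.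
have : r (e |: I) <> #|e |: I| by move=> /(maxI _ eA); apply/negP.
by rewrite cardsU1 eNI; have := rankU1 I e; lia.
Qed.

Lemma basis_meet_le B X : is_basis r B -> #|B :&: X| <= r X.
Proof.
case/andP => /eqP indB _; rewrite -(indepS indB (subsetIl B X)).
exact/rankS/subsetIr.
Qed.

Lemma exists_basis_meet A : exists2 B, is_basis r B & #|B :&: A| = r A.
Proof.
pose indA I := (I \subset A) && (r I == #|I|).
have [|I /andP [sIA /eqP indepI] maxI] := @arg_maxnP _ set0 indA (fun I => #|I|).
  by rewrite /indA sub0set rank0 cards0.
pose extI J := (I \subset J) && (r J == #|J|).
have [|J /andP [sIJ /eqP indepJ] maxJ] := @arg_maxnP _ I extI (fun J => #|J|).
  by rewrite /extI subxx indepI eqxx.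
have rA : r A = #|I|.
  apply: rank_maximal_indep => // e eA indeI; apply: contraT => eNI.
  have := maxI (e |: I); rewrite /indA subUset sub1set eA sIA indeI eqxx cardsU1 eNI.
  by move/(_ isT); lia.
have rE : r [set: E] = #|J|.
  apply: rank_maximal_indep => // e _ indeJ; apply: contraT => eNJ.
  have := maxJ (e |: J); rewrite /extI (subset_trans sIJ (subsetUr _ _)) indeJ eqxx.
  by rewrite cardsU1 eNJ => /(_ isT); lia.
have BJ : is_basis r J by rewrite /is_basis indepJ rE !eqxx.
exists J => //; apply/eqP; rewrite eqn_leq basis_meet_le // rA.
by apply: subset_leq_card; rewrite subsetI sIJ sIA.
Qed.

End MatroidRank.

Section LatticePoints.
Variables (R : realFieldType) (E : finType) (r : {set E} -> nat).
Hypothesis hr : is_matroid_rank r.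
Implicit Types (B S X : {set E}) (e : E) (p d : E -> R).

Lemma sum_indic B X : \sum_(e in X) indic R B e = #|B :&: X|%:R.
Proof.
rewrite /indic -big_mkcondr sumr_const; congr (_ *+ _).
by apply: eq_card => e; rewrite !inE andbC.
Qed.

Lemma sum_mul_indic1 (l : E -> R) e : \sum_i l i * indic R [set i] e = l e.
Proof.
rewrite (bigD1 e) //= big1 => [|i neq_ie]; first by rewrite /indic set11 mulr1 addr0.
by rewrite /indic inE eq_sym (negbTE neq_ie) mulr0.
Qed.

Lemma in_DeltaP d : in_Delta d <-> (forall e, 0 <= d e) /\ \sum_e d e = 1.
Proof.
split=> [[l [l_ge0 _ l_sum dE]] | [d_ge0 d_sum]].
  have dl e : d e = l e by rewrite dE sum_mul_indic1.
  by split=> [e|]; rewrite ?dl // (eq_bigr l) // -l_sum.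
by exists d; split=> // e; rewrite sum_mul_indic1.
Qed.

Lemma in_Delta_indic1 e : in_Delta (indic R [set e]).
Proof.
apply/in_DeltaP; split=> [i|]; first by rewrite /indic; case: (_ \in _).
by rewrite (eq_bigr (fun i => 1 * indic R [set i] e)) ?sum_mul_indic1 // => i _;
   rewrite mul1r /indic !inE eq_sym.
Qed.

Lemma in_PM_setsum p : in_PM r p ->
  exists l : {set E} -> R, [/\ forall B, 0 <= l B, \sum_(B in is_basis r) l B = 1 &
    forall X, \sum_(e in X) p e = \sum_(B in is_basis r) l B * #|B :&: X|%:R].
Proof.
case=> l [l_ge0 _ l_sum pE]; exists l; split=> // X.
under eq_bigr => e _ do rewrite pE.
by rewrite exchange_big; apply: eq_bigr => B _; rewrite -mulr_sumr sum_indic.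
Qed.

Lemma in_PM_sum_le p X : in_PM r p -> \sum_(e in X) p e <= (r X)%:R.
Proof.
case/in_PM_setsum => l [l_ge0 l_sum ->].
apply: (@le_trans _ _ (\sum_(B in is_basis r) l B * (r X)%:R)).
  by apply: ler_sum => B basisB; rewrite ler_wpM2l // ler_nat basis_meet_le.
by rewrite -mulr_suml l_sum mul1r.
Qed.

Lemma in_PM_sum p : in_PM r p -> \sum_e p e = (r [set: E])%:R.
Proof.
case/in_PM_setsum => l [_ l_sum sumE].
have := sumE [set: E]; rewrite (eq_bigl predT) => [->|e]; last by rewrite inE.
rewrite -[RHS]mul1r -l_sum mulr_suml; apply: eq_bigr => B /andP [_ /eqP <-].
by rewrite setIT.
Qed.

Lemma in_PM_indic B : is_basis r B -> in_PM r (indic R B).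
Proof.
move=> basisB; exists (fun B' => (B' == B)%:R); split.
- by move=> B'; case: (B' == B).
- by move=> B' nbasisB'; case: eqP nbasisB' => // -> /negP[].
- by rewrite (bigD1 B) //= eqxx big1 ?addr0 // => B' /andP [_ /negbTE ->].
move=> e; rewrite (bigD1 B) //= eqxx mul1r big1 ?addr0 //.
by move=> B' /andP [_ /negbTE ->]; rewrite mul0r.
Qed.

Lemma scaled_in_Delta e0 (y : E -> R) (n : nat) :
  (forall e, 0 <= y e) -> \sum_e y e = n%:R ->
  exists2 d, in_Delta d & forall e, y e = n%:R * d e.
Proof.
move=> y_ge0 y_sum; have [n0 | n_gt0] := posnP n.
  exists (indic R [set e0]); first exact: in_Delta_indic1.
  have y0 : \sum_e y e = 0 by rewrite y_sum n0.
  by move=> e; rewrite (psumr_eq0P (fun i _ => y_ge0 i) y0) // n0 mul0r.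
exists (fun e => y e / n%:R) => [|e]; last by rewrite mulrC divfK // pnatr_eq0 -lt0n.
apply/in_DeltaP; split=> [e|]; first by rewrite divr_ge0.
by rewrite -mulr_suml y_sum divff // pnatr_eq0 -lt0n.
Qed.

Lemma in_minkowski_decomp e0 (t u : nat) (p y z x : E -> R) :
  in_PM r p -> (forall e, 0 <= y e) -> (forall e, 0 <= z e) ->
  \sum_e y e = u%:R -> \sum_e z e = t%:R ->
  (forall e, x e = p e + y e - z e) -> in_minkowski r t u x.
Proof.
move=> PMp y_ge0 z_ge0 y_sum z_sum xE.
have [d1 Dd1 yE] := scaled_in_Delta e0 y_ge0 y_sum.
have [d2 Dd2 zE] := scaled_in_Delta e0 z_ge0 z_sum.
by exists p, d1, d2; split=> // e; rewrite xE yE zE mulrN.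
Qed.

End LatticePoints.

(** * Lattice points of P(M) + u Delta + t Nabla *)

Section MinkowskiLatticePoints.
Variables (R : realFieldType) (E : finType) (r : {set E} -> nat).
Hypothesis hr : is_matroid_rank r.
Variables (t u K : nat).
Implicit Types (f : {ffun E -> 'I_K}) (S : {set E}).

Definition shift_point f : E -> R := fun e => (f e : nat)%:R - t%:R.

Definition lattice_cond f : bool :=
  let S := pos_support t f in
  (r [set: E] - r S + neg_mass t S f <= t)%N &&
  (#|S| + pos_excess t S f + t == r [set: E] + u + neg_mass t S f)%N.

Lemma sum_shift_point_pos f :
  \sum_(e in pos_support t f) shift_point f e =
  (#|pos_support t f| + pos_excess t (pos_support t f) f)%:R.
Proof.
rewrite /pos_excess natrD natr_sum -[#|_|]sum1_card natr_sum -big_split /=.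
apply: eq_bigr => e; rewrite inE => lt_tf; rewrite /shift_point.
set k := (f e - t - 1)%N; have -> : (f e : nat) = (1 + k + t)%N by rewrite /k; lia.
by rewrite natrD addrK natrD.
Qed.

Lemma sum_shift_point_neg f :
  \sum_(e in ~: pos_support t f) shift_point f e = - (neg_mass t (pos_support t f) f)%:R.
Proof.
rewrite /neg_mass natr_sum -sumrN; apply: eq_bigr => e; rewrite !inE -leqNgt => le_ft.
by rewrite /shift_point -[in t%:R](subnKC le_ft) natrD opprD addrA subrr add0r.
Qed.

Lemma sum_shift_point f :
  \sum_e shift_point f e =
  (#|pos_support t f| + pos_excess t (pos_support t f) f)%:R
  - (neg_mass t (pos_support t f) f)%:R.
Proof.
rewrite (bigID (mem (pos_support t f))) /= sum_shift_point_pos -sum_shift_point_neg.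
by congr (_ + _); apply: eq_bigl => e; rewrite in_setC.
Qed.

Lemma minkowski_lattice_cond f :
  in_minkowski r t u (shift_point f) -> lattice_cond f.
Proof.
case=> p [d1 [d2 [PMp /in_DeltaP [d1_ge0 d1_sum] /in_DeltaP [d2_ge0 d2_sum] xE]]].
rewrite /lattice_cond; set S := pos_support t f.
have sumX (X : {set E}) : \sum_(e in X) shift_point f e =
    \sum_(e in X) p e + u%:R * \sum_(e in X) d1 e - t%:R * \sum_(e in X) d2 e.
  by rewrite (eq_bigr _ (fun e _ => xE e)) !big_split /= -!mulr_sumr sumrN mulrN.
apply/andP; split.
  have := sumX (~: S); rewrite sum_shift_point_neg.
  have : \sum_(e in ~: S) p e = (r [set: E])%:R - \sum_(e in S) p e.
    rewrite -(in_PM_sum PMp) [in RHS](bigID (mem S)) /= addrAC subrr add0r.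
    by apply: eq_bigl => e; rewrite in_setC.
  have := in_PM_sum_le hr S PMp.
  have : 0 <= u%:R * \sum_(e in ~: S) d1 e by rewrite mulr_ge0 ?sumr_ge0.
  have : t%:R * \sum_(e in ~: S) d2 e <= t%:R.
    rewrite ler_piMr // -d2_sum [leRHS](bigID (mem (~: S))) /= lerDl.
    exact: sumr_ge0.
  rewrite -(ler_nat R) natrD natrB ?rank_le_top //; lra.
have tot : \sum_e shift_point f e = (r [set: E])%:R + u%:R - t%:R.
  under eq_bigr => e _ do rewrite xE.
  by rewrite !big_split /= -!mulr_sumr sumrN d1_sum d2_sum (in_PM_sum PMp) mulrN !mulr1.
move: tot; rewrite sum_shift_point -/S => tot.
by rewrite -(eqr_nat R) !natrD; apply/eqP; lra.
Qed.

Lemma lattice_cond_minkowski (e0 : E) f :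
  lattice_cond f -> in_minkowski r t u (shift_point f).
Proof.
rewrite /lattice_cond; set S := pos_support t f.
set al := neg_mass t S f; set be := pos_excess t S f; move=> /andP [c1 /eqP c2].
have [B basisB BS] := exists_basis_meet hr S.
have cardB : #|B| = r [set: E] by case/andP: basisB => _ /eqP.
pose b e : nat := e \in B.
pose slack := (t - (r [set: E] - r S + al))%N.
(* [z] is the [t Nabla] part: it absorbs the negative coordinates of [x - e_B],
   and the slack left in the inequality [c1] is parked at [e0]. *)
pose z e : nat := ((if e \in S then 0 else b e + (t - f e)) + (if e == e0 then slack else 0))%N.
have sum_b : (\sum_e b e = r [set: E])%N by rewrite -cardB -sum1_card [RHS]big_mkcond.
have sum_bS : (\sum_(e | e \notin S) b e = #|B :\: S|)%N.
  rewrite -sum1_card [RHS]big_mkcond [LHS]big_mkcond; apply: eq_bigr => e _.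
  by rewrite /b !inE; case: (t < f e)%N; case: (e \in B).
have alE : (\sum_(e | e \notin S) (t - f e) = al)%N.
  by apply: eq_bigl => e; rewrite in_setC.
have sum_z : (\sum_e z e = t)%N.
  rewrite big_split /= -big_mkcond big_pred1_eq (bigID (mem S)) /=.
  rewrite big1 => [|e ->] //; rewrite add0n.
  rewrite (eq_bigr (fun e => b e + (t - f e))%N) => [|e /negbTE -> //].
  by rewrite big_split /= sum_bS alE; have := cardsID S B; rewrite BS /slack; lia.
apply: (in_minkowski_decomp e0 (p := indic R B)
         (y := fun e => shift_point f e - (b e)%:R + (z e)%:R)
         (z := fun e => (z e)%:R)) => [|e|e|||e].
- exact: in_PM_indic.
- have : (b e + t <= f e + z e)%N.
    have := leq_b1 (e \in B); rewrite /z /b inE.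
    by case: ltnP => ?; case: (e == e0); lia.
  by rewrite /shift_point -(ler_nat R) !natrD; lra.
- exact: ler0n.
- rewrite big_split /= sumrB -!natr_sum sum_z sum_b sum_shift_point -/S -/al -/be.
  by move/(congr1 (fun n : nat => n%:R : R)): c2; rewrite !natrD; lra.
- by rewrite -natr_sum sum_z.
have -> : indic R B e = (b e)%:R by rewrite /indic /b; case: (e \in B).
by ring.
Qed.

Lemma in_minkowski_latticeP (e0 : E) f :
  reflect (in_minkowski r t u (shift_point f)) (lattice_cond f).
Proof.
by apply: (iffP idP); [apply: lattice_cond_minkowski | apply: minkowski_lattice_cond].
Qed.

Lemma lattice_cond_fibre f S : pos_support t f = S ->
  lattice_cond f =
  (r [set: E] - r S + neg_mass t S f <= t)%N &&
  (#|S| - r S + pos_excess t S f + t == r [set: E] - r S + neg_mass t S f + u)%N.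
Proof.
move=> fS; rewrite /lattice_cond fS; congr (_ && _); apply/eqP/eqP.
all: by have := rank_le_top hr S; have := rank_le_card hr S; lia.
Qed.

End MinkowskiLatticePoints.

Lemma asboolP (P : Prop) : reflect P (asbool P).
Proof. by rewrite /asbool; case: excluded_middle_informative => ?; constructor. Qed.

Theorem mainTheorem3 (R : realFieldType) (E : finType) (r : {set E} -> nat)
    (hr : is_matroid_rank r) (hE : (0 < #|E|)%N) :
  forall t u : nat, ((QM R r t u)%:R : rat) = rhs_series r t u.
Proof.
move=> t u; have [e0 _] := card_gt0P hE.
have -> : QM R r t u = #|[set f : {ffun E -> 'I_(t + u + 2)} | lattice_cond r t u f]|.
  by apply: eq_card => f; rewrite !inE; apply/asboolP/(in_minkowski_latticeP R hr t u e0).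
rewrite (congr1 (fun s : fpsR => s t u) (rhs_seriesE (rank_le_top hr) (rank_le_card hr))).
rewrite fps_coef_sum.
rewrite -sum1_card natr_sum big_mkcond /= (partition_big (fun f => pos_support t f) predT) //=.
apply: eq_bigr => S _; rewrite -(@count_fibre _ t (t + u + 2)); last by lia.
by apply: eq_bigr => f /eqP fS; rewrite inE (lattice_cond_fibre hr u fS).
Qed.
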